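(* Let $\beta>1$, $l\in(-1,0]$, $r=l+1$, and let $d$ be the $(-\beta,l)$-expansion. If every rational number $x\in[l,r)$ has eventually periodic $(-\beta,l)$-expansion $d(x)$, then $\beta$ is either a Pisot number or a Salem number.
   Context: For $\beta>1$ and $l\in(-1,0]$, $r=l+1$, the $(-\beta,l)$-transformation is $T:[l,r)\to[l,r)$, $T(x)=-\beta x-\lfloor -\beta x-l\rfloor$. The $(-\beta,l)$-expansion of $x\in[l,r)$ is the integer sequence $d(x)=x_1x_2x_3\cdots$ with $x_i=\lfloor -\beta T^{i-1}(x)-l\rfloor$. A Pisot number is a real algebraic integer $>1$ all of whose other conjugates have modulus $<1$; a Salem number is a real algebraic integer $>1$ all of whose other conjugates have modulus $\le1$, with at least one conjugate of modulus exactly $1$. *)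

From HB Require Import structures.
From mathcomp Require Import all_boot all_order all_algebra.
From mathcomp Require Import reals.
From mathcomp Require Import complex.
Set Implicit Arguments. Unset Strict Implicit. Unset Printing Implicit Defensive.
Import Order.TTheory GRing.Theory Num.Theory.
Local Open Scope ring_scope.

Section NegBeta.
Variable R : realType.

Definition negbeta_T (beta l x : R) : R :=
  - beta * x - (Num.floor (- beta * x - l))%:~R.

(* Digits of the (-beta,l)-expansion: x_i = floor(-beta T^{i-1}(x) - l),
   indexed from 0 here: digit n = x_{n+1}. *)
Definition negbeta_digit (beta l x : R) (n : nat) : int :=
  Num.floor (- beta * iter n (negbeta_T beta l) x - l).

Definition eventually_periodic (u : nat -> int) : Prop :=
  exists N p : nat, (0 < p)%N /\ forall n, (N <= n)%N -> u (n + p)%N = u n.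

Definition is_rational (x : R) : Prop := exists q : rat, x = ratr q.

Definition is_minpoly (beta : R) (p : {poly rat}) : Prop :=
  p \is monic /\ root (map_poly ratr p) beta /\
  forall q : {poly rat}, q != 0 -> root (map_poly ratr q) beta ->
    (size p <= size q)%N.

Definition alg_int_minpoly (beta : R) (p : {poly rat}) : Prop :=
  is_minpoly beta p /\ forall i, p`_i \is a Num.int.

Definition other_conjugate (beta : R) (p : {poly rat}) (z : R[i]) : Prop :=
  root (map_poly ratr p) z /\ z != (beta%:C)%C.

Definition Pisot (beta : R) : Prop :=
  1 < beta /\ exists p, alg_int_minpoly beta p /\
    forall z : R[i], other_conjugate beta p z -> `|z| < 1.

Definition Salem (beta : R) : Prop :=
  1 < beta /\ exists p, alg_int_minpoly beta p /\
    (forall z : R[i], other_conjugate beta p z -> `|z| <= 1) /\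
    exists z : R[i], other_conjugate beta p z /\ `|z| = 1.

End NegBeta.

From HB Require Import structures.
From mathcomp Require Import all_boot all_order all_algebra.
From mathcomp Require Import reals complex boolp.
From mathcomp Require Import ring lra zify.
Set Implicit Arguments. Unset Strict Implicit. Unset Printing Implicit Defensive.
Import Order.TTheory GRing.Theory Num.Theory Normc.
Local Open Scope ring_scope.

(* Write T^k x = (-beta)^k x - sum_(i < k) d_i (-beta)^(k-1-i), the value at
   beta of a polynomial W_k whose coefficients are integers except the leading
   one, (-1)^k x.  If the digits of x are periodic from N on with period P,
   the difference T^(N+P+k) x - T^(N+k) x is multiplied by -beta at each step
   while staying in an interval of length 1, hence T^(N+P) x = T^N x and beta
   is a root of W_(N+P) - W_N.  For x = 1/n this polynomial is, up to the
   factor +-n, monic with integer coefficients, so beta is an algebraic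
   integer.
   A conjugate g with |g| > 1 is also a root of W_(N+P) - W_N, for every
   rational x, so the sequence obtained by replacing beta with g in the
   expansion of x is eventually periodic, hence bounded, hence bounded by
   (beta + 1) / (|g| - 1) uniformly in x.  Taking a rational X that shares
   m + 1 digits with a point x' such that T x' is rational, the g-sequences of
   X (shifted by one) and of T x' differ by (-g)^m (beta x' - g X); this keeps
   |g|^m |beta - g| bounded, so g = beta. *)

Lemma ler_bernoulli (F : realFieldType) (r : F) k :
  1 <= r -> 1 + k%:R * (r - 1) <= r ^+ k.
Proof.
move=> r_ge1; elim: k => [|k IHk]; first by rewrite mul0r addr0 expr0.
have kr_ge0 : 0 <= k%:R * (r - 1) by rewrite mulr_ge0 ?ler0n ?subr_ge0.
have : r * (1 + k%:R * (r - 1)) <= r * r ^+ k by rewrite ler_wpM2l ?IHk //; lra.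
rewrite exprS -natr1; nra.
Qed.

Lemma expr_bounded_le0 (F : archiRealFieldType) (r a C : F) :
  1 < r -> (forall k, r ^+ k * a <= C) -> a <= 0.
Proof.
move=> r_gt1 bounded; rewrite leNgt; apply/negP => a_gt0.
have r1_gt0 : 0 < r - 1 by rewrite subr_gt0.
pose k := Num.bound (`|C| / a / (r - 1)).
have C_le : `|C| <= k%:R * (r - 1) * a.
  rewrite -ler_pdivrMr // -ler_pdivrMr // ltW // archi_boundP //.
  by rewrite !divr_ge0 // ltW.
have grow : (1 + k%:R * (r - 1)) * a <= r ^+ k * a.
  by rewrite ler_pM2r // ler_bernoulli // ltW.
have := bounded k; have := ler_norm C; nra.
Qed.

Lemma eventually_periodic_bounded (F : realDomainType) (u : nat -> F) N P :
  (0 < P)%N -> (forall n, (N <= n)%N -> u (n + P)%N = u n) ->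
  exists B, forall n, `|u n| <= B.
Proof.
move=> P_gt0 u_per; exists (\sum_(i < N + P) `|u i|).
elim/ltn_ind => n IHn; have [n_lt|n_ge] := ltnP n (N + P).
  rewrite (bigD1 (Ordinal n_lt)) //= lerDl.
  by apply: sumr_ge0 => i _; apply: normr_ge0.
by rewrite -(subnK (leq_trans (leq_addl N P) n_ge)) u_per ?IHn; lia.
Qed.

Section ComplexModulus.
Variable R : rcfType.
Implicit Types (x y : R[i]) (k : R).

Lemma normcE x : `|x| = (normc x)%:C%C.
Proof. by case: x. Qed.

Lemma normc_ge0 x : 0 <= normc x.
Proof. by rewrite -lecR -normcE normr_ge0. Qed.

Lemma normcD x y : normc (x + y) <= normc x + normc y.
Proof. by rewrite -lecR rmorphD /= -!normcE ler_normD. Qed.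

Lemma normcB x y : normc (x - y) <= normc x + normc y.
Proof. by rewrite -[normc y]normcN normcD. Qed.

Lemma normcX x n : normc (x ^+ n) = normc x ^+ n.
Proof. by elim: n => [|n IHn]; rewrite ?normc1 // !exprS normcM IHn. Qed.

Lemma normc_real k : normc k%:C%C = `|k|.
Proof. by rewrite /= expr0n addr0 sqrtr_sqr. Qed.

Lemma normc_intr (z : int) : normc (z%:~R : R[i]) = `|z%:~R : R|.
Proof. by rewrite -(rmorph_int (real_complex R)) normc_real. Qed.

Lemma normc_gt1 x : (1 < normc x) = (1 < `|x|).
Proof. by rewrite normcE ltcR. Qed.

Lemma normc_subC_mul_le (b u v : R) x : 0 < u <= v ->
  normc (b%:C%C - x) * u <= normc ((b * u)%:C%C - x * v%:C%C) + normc x * (v - u).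
Proof.
move=> /andP[u_gt0 u_le_v].
have -> : normc (b%:C%C - x) * u = normc ((b%:C%C - x) * u%:C%C).
  by rewrite normcM normc_real gtr0_norm.
have -> : (b%:C%C - x) * u%:C%C = (b * u)%:C%C - x * v%:C%C + x * (v - u)%:C%C.
  by rewrite !rmorphB rmorphM /=; ring.
by rewrite (le_trans (normcD _ _)) // normcM normc_real ger0_norm // subr_ge0.
Qed.

End ComplexModulus.

Fixpoint digit_orbit (V : pzRingType) (g x : V) (d : nat -> int) n : V :=
  if n is n'.+1 then - g * digit_orbit g x d n' - (d n')%:~R else x.

Section DigitOrbit.
Variable V : pzRingType.
Implicit Types (g x y : V) (d e : nat -> int).

Lemma digit_orbitD g x d m n :
  digit_orbit g x d (m + n) = digit_orbit g (digit_orbit g x d m) (fun i => d (m + i)%N) n.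
Proof. by elim: n => [|n IHn]; rewrite ?addn0 // addnS /= IHn. Qed.

Lemma digit_orbitB g x y d e n : (forall i, (i < n)%N -> d i = e i) ->
  digit_orbit g x d n - digit_orbit g y e n = (- g) ^+ n * (x - y).
Proof.
elim: n => [|n IHn] de_eq /=; first by rewrite mul1r.
rewrite de_eq // opprB addrA addrNK -mulrBr IHn ?exprS ?mulrA // => i i_lt.
by rewrite de_eq // ltnW.
Qed.

Lemma digit_orbit_periodic g x d N P :
  (forall n, (N <= n)%N -> d (n + P)%N = d n) ->
  digit_orbit g x d (N + P) = digit_orbit g x d N ->
  forall n, (N <= n)%N -> digit_orbit g x d (n + P) = digit_orbit g x d n.
Proof.
move=> d_per orbit_eq n /subnKC <-; apply/eqP; rewrite -subr_eq0.
rewrite addnAC (digit_orbitD g x d (N + P)) orbit_eq (digit_orbitD g x d N).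
rewrite digit_orbitB ?subrr ?mulr0 // => i _.
by rewrite addnAC d_per ?leq_addr.
Qed.

Lemma rmorph_digit_orbit (W : pzRingType) (f : {rmorphism V -> W}) g x d n :
  f (digit_orbit g x d n) = digit_orbit (f g) (f x) d n.
Proof. by elim: n => [|n IHn] //=; rewrite rmorphB rmorphM rmorphN rmorph_int IHn. Qed.

End DigitOrbit.

Lemma horner_digit_orbit (F : numFieldType) (g : F) (c : rat) d n :
  (map_poly ratr (digit_orbit 'X c%:P d n)).[g] = digit_orbit g (ratr c) d n.
Proof.
rewrite (rmorph_digit_orbit (map_poly ratr)) -horner_evalE rmorph_digit_orbit.
by rewrite /= map_polyX map_polyC !horner_evalE hornerX hornerC.
Qed.

Lemma normc_digit_orbit_le (R : realType) (g w : R[i]) d (D : R) :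
  1 < normc g -> (forall i, `|(d i)%:~R : R| <= D) ->
  (exists B, forall n, normc (digit_orbit g w d n) <= B) ->
  forall n, normc (digit_orbit g w d n) <= D / (normc g - 1).
Proof.
move=> g_gt1 d_le [B orbit_le] n.
set r := normc g; set K := D / (r - 1); set o := digit_orbit g w d.
have DK : K * (r - 1) = D by rewrite divfK // subr_eq0 gt_eqF.
rewrite mulrBr mulr1 in DK.
have step k : r * (normc (o k) - K) <= normc (o k.+1) - K.
  have : r * normc (o k) <= normc (o k.+1) + D.
    rewrite /r -normcM (_ : g * o k = - o k.+1 - (d k)%:~R); last by rewrite /o /=; ring.
    by rewrite (le_trans (normcB _ _)) // normcN normc_intr lerD2l.
  rewrite mulrBr; lra.
have grow j : r ^+ j * (normc (o n) - K) <= normc (o (j + n)%N) - K.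
  elim: j => [|j IHj]; first by rewrite mul1r.
  by rewrite exprS -mulrA addSn (le_trans _ (step _)) // ler_wpM2l ?normc_ge0.
have : normc (o n) - K <= 0.
  by apply: (expr_bounded_le0 (C := B - K) g_gt1) => j; rewrite (le_trans (grow j)) // lerD2r.
lra.
Qed.

Section DigitPoly.
Variable R0 : nzRingType.
Implicit Types (d : nat -> int).

Lemma size_digit_orbit0 d n : (size (digit_orbit 'X (0 : {poly R0}) d n) <= n)%N.
Proof.
elim: n => [|n IHn] /=; first by rewrite size_poly0.
rewrite (leq_trans (size_polyD _ _)) // geq_max size_polyN.
rewrite (leq_trans (size_polyMleq _ _)) ?size_polyN ?size_polyX //=.
by rewrite -[_%:~R]/(1 *~ _) -polyC1 -polyCMz (leq_trans (size_polyC_leq1 _)).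
Qed.

End DigitPoly.

Lemma digit_orbit0_int d n i : (digit_orbit 'X 0 d n : {poly rat})`_i \is a Num.int.
Proof.
elim: n i => [|n IHn] i /=; first by rewrite coef0 rpred0.
rewrite coefB mulNr coefN coefXM -[_%:~R]/(1 *~ _) coefMrz coef1.
by rewrite rpredB ?rpredN ?rpredMz ?rpred_nat //; case: eqP.
Qed.

(* With d the digits of q, the polynomial digit_orbit 'X q%:P d k evaluates to
   T^k q at beta, so period_poly vanishes at beta when the expansion of q is
   periodic from N on with period P. *)
Definition period_poly (q : rat) (d : nat -> int) (N P : nat) : {poly rat} :=
  digit_orbit 'X q%:P d (N + P) - digit_orbit 'X q%:P d N.

Lemma period_poly_unit_fraction n d N P : (0 < n)%N ->
  let V k := digit_orbit 'X 0 d k in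
  ((-1) ^+ (N + P) * n%:R) *: period_poly n%:R^-1 d N P =
  'X^(N + P) + ((-1) ^+ (N + P) * n%:R) *: (V (N + P) - V N)
             - ((-1) ^+ (N + P) * (-1) ^+ N) *: 'X^N.
Proof.
move=> n_gt0 V; rewrite /period_poly.
have orbitE k : digit_orbit 'X n%:R^-1%:P d k = (-1) ^+ k *: 'X^k * n%:R^-1%:P + V k.
  apply/eqP; rewrite -subr_eq (digit_orbitB _ _ _ (fun _ _ => erefl)) subr0.
  by rewrite exprNn -mul_polyC rmorphXn rmorphN1.
have nK : n%:R%:P * n%:R^-1%:P = 1 :> {poly rat}.
  by rewrite -rmorphM mulfV ?polyC1 // pnatr_eq0 -lt0n.
have sK : (-1) ^+ (N + P) * (-1) ^+ (N + P) = 1 :> rat by rewrite -expr2 sqrr_sign.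
rewrite !orbitE -!mul_polyC !rmorphM /=.
set a := n%:R%:P; set b := n%:R^-1%:P; set s := ((-1) ^+ (N + P))%:P.
have sK' : s * s = 1 by rewrite -rmorphM sK.
rewrite [LHS](_ : _ = s * s * (a * b) * 'X^(N + P)
    - s * ((-1) ^+ N)%:P * (a * b) * 'X^N + s * a * (V (N + P) - V N)); last by ring.
by rewrite sK' nK; ring.
Qed.

Lemma period_poly_unit_fraction_monic n d N P : (0 < n)%N -> (0 < P)%N ->
  ((-1) ^+ (N + P) * n%:R) *: period_poly n%:R^-1 d N P \is monic.
Proof.
move=> n_gt0 P_gt0; rewrite period_poly_unit_fraction // -addrA monicE.
rewrite lead_coefDl ?lead_coefXn // size_polyXn ltnS.
rewrite (leq_trans (size_polyD _ _)) // geq_max size_polyN.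
rewrite !(leq_trans (size_scale_leq _ _)) // ?size_polyXn; first lia.
rewrite (leq_trans (size_polyD _ _)) // geq_max size_polyN.
by rewrite !(leq_trans (size_digit_orbit0 _ _ _)) ?leq_addr.
Qed.

Lemma period_poly_unit_fraction_int n d N P i : (0 < n)%N ->
  (((-1) ^+ (N + P) * n%:R) *: period_poly n%:R^-1 d N P)`_i \is a Num.int.
Proof.
move=> n_gt0; rewrite period_poly_unit_fraction // !(coefB, coefD, coefZ) !coefXn.
by rewrite !(rpredB, rpredD, rpredM, rpredX, rpredN, rpred1, rpred_nat, digit_orbit0_int).
Qed.

Lemma dvdp_monic_int (p M : {poly rat}) : p \is monic -> M \is monic ->
  (forall i, M`_i \is a Num.int) -> p %| M -> forall i, p`_i \is a Num.int.
Proof.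
move=> p_monic M_monic M_int.
have /floorpK M_eq : M \is a polyOver Num.int by apply/polyOverP.
rewrite -M_eq => /dvdpP_rat_int [p1 [a a_neq0 p_eq] [r M1_eq]] i; subst p.
have lead_M1 : lead_coef (map_poly Num.floor M) = 1.
  apply: (@intr_inj rat); rewrite rmorph1 -(lead_coef_map_inj intr_inj) ?rmorph0 //.
  by rewrite M_eq; apply/eqP.
have : lead_coef p1 \is a intUnitRing.unitz.
  by apply: (@intUnitRing.unitzPl _ (lead_coef r)); rewrite mulrC -lead_coefM -M1_eq.
have /eqP := p_monic; rewrite lead_coefZ (lead_coef_map_inj intr_inj) ?rmorph0 //.
rewrite qualifE /= coefZ coef_map /= => a_lead /orP[] /eqP lead_p1; move: a_lead.
  by rewrite lead_p1 mulr1 => ->; rewrite mul1r rpred_int.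
by rewrite lead_p1 mulrN1 => /eqP; rewrite eqr_oppLR => /eqP ->; rewrite mulN1r rpredN rpred_int.
Qed.

Section MinimalPolynomial.
Variables (R : realType) (beta : R).

Lemma exists_minpoly (Q : {poly rat}) :
  Q != 0 -> root (map_poly ratr Q) beta -> exists p, is_minpoly beta p.
Proof.
move=> Q_neq0 rootQ.
pose annihilating n := `[< exists q : {poly rat},
  [/\ q != 0, root (map_poly ratr q) beta & size q = n] >].
have : exists n, annihilating n by exists (size Q); apply/asboolP; exists Q.
case/ex_minnP => _ /asboolP [p [p_neq0 rootp <-]] p_min.
have lead_p_neq0 : lead_coef p != 0 by rewrite lead_coef_eq0.
exists ((lead_coef p)^-1 *: p); split; [|split].
- by rewrite monicE lead_coefZ mulVf.
- by rewrite map_polyZ rootE hornerZ (rootP rootp) mulr0.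
- move=> q q_neq0 rootq; rewrite size_scale ?invr_eq0 //.
  by apply: p_min; apply/asboolP; exists q.
Qed.

Lemma minpoly_dvdp p Q : is_minpoly beta p -> root (map_poly ratr Q) beta -> p %| Q.
Proof.
move=> [p_monic [rootp p_min]] rootQ; apply/modp_eq0P/eqP.
apply/negPn/negP => mod_neq0.
have : root (map_poly ratr (Q %% p)) beta.
  move: rootQ; rewrite {1}(divp_eq Q p) rmorphD rmorphM /= !rootE hornerD hornerM.
  by rewrite (rootP rootp) mulr0 add0r.
by move/(p_min _ mod_neq0); rewrite leqNgt ltn_modp monic_neq0.
Qed.

Lemma minpoly_root_conjugate p Q (z : R[i]) : is_minpoly beta p ->
  root (map_poly ratr Q) beta -> root (map_poly ratr p) z -> root (map_poly ratr Q) z.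
Proof.
move=> p_min /(minpoly_dvdp p_min) /dvdpP [r ->] rootp.
by rewrite rmorphM rootE hornerM (rootP rootp) mulr0.
Qed.

End MinimalPolynomial.

Section NegBetaDynamics.
Variables (R : realType) (beta l : R).
Hypotheses (beta_gt1 : 1 < beta) (l_gtN1 : -1 < l) (l_le0 : l <= 0).
Local Notation T := (negbeta_T beta l).
Local Notation digit := (negbeta_digit beta l).

Lemma negbeta_T_itv x : l <= T x < l + 1.
Proof.
have /andP[] := floor_itv (- beta * x - l).
by rewrite /negbeta_T intrD => ? ?; apply/andP; split; lra.
Qed.

Lemma iter_negbeta_T_itv n x : l <= x < l + 1 -> l <= iter n T x < l + 1.
Proof. by case: n => [//|n] _; rewrite iterS negbeta_T_itv. Qed.

Lemma negbeta_digitD x m n : digit x (m + n) = digit (iter m T x) n.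
Proof. by rewrite /negbeta_digit addnC iterD. Qed.

Lemma negbeta_TE x : T x = - beta * x - (digit x 0)%:~R.
Proof. by []. Qed.

Lemma iter_negbeta_T x n : iter n T x = digit_orbit beta x (digit x) n.
Proof.
elim: n => [//|n IHn]; rewrite iterS negbeta_TE /= -IHn.
by rewrite -negbeta_digitD addn0.
Qed.

Lemma iter_negbeta_TD x m k :
  iter (m + k) T x = digit_orbit beta (iter m T x) (fun i => digit x (m + i)%N) k.
Proof. by rewrite !iter_negbeta_T digit_orbitD. Qed.

Lemma negbeta_digit_bound x n : l <= x < l + 1 -> `|(digit x n)%:~R : R| <= beta + 1.
Proof.
rewrite -[n]addn0 negbeta_digitD => /(iter_negbeta_T_itv n).
move: (iter n T x) => t /andP[t_ge t_lt]; rewrite /negbeta_digit /=.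
have := beta_gt1; have := l_gtN1; have := l_le0 => *.
have : beta * l <= beta * t <= beta * l + beta by apply/andP; split; nra.
have : 0 < beta * l + beta by nra.
have : beta * l <= 0 by nra.
have /andP[] := floor_itv (- beta * t - l); rewrite intrD rmorph1 mulNr.
rewrite ler_norml; move=> ? ? ? ? /andP[? ?]; apply/andP; split; lra.
Qed.

Lemma negbeta_T_periodic x N P : l <= x < l + 1 ->
  (forall n, (N <= n)%N -> digit x (n + P) = digit x n) ->
  iter (N + P) T x = iter N T x.
Proof.
move=> x_itv digit_per; apply/eqP; rewrite -subr_eq0 -normr_le0.
apply: (@expr_bounded_le0 _ beta _ 1 beta_gt1) => k.
have diffE : iter (N + P + k) T x - iter (N + k) T x =
    (- beta) ^+ k * (iter (N + P) T x - iter N T x).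
  rewrite !iter_negbeta_TD digit_orbitB // => i _.
  by rewrite addnAC digit_per ?leq_addr.
have -> : beta ^+ k = `|(- beta) ^+ k|.
  by rewrite normrX normrN ger0_norm //; have := beta_gt1; lra.
rewrite -normrM -diffE ltW //.
have /andP[? ?] := iter_negbeta_T_itv (N + P + k) x_itv.
have /andP[? ?] := iter_negbeta_T_itv (N + k) x_itv.
by rewrite ltr_norml; apply/andP; split; lra.
Qed.

Lemma negbeta_digit0_const a b : a < b ->
  exists a1 e, a <= a1 < b /\ forall x, a1 < x < b -> digit x 0 = e.
Proof.
move=> ab; have beta_gt0 : 0 < beta by have := beta_gt1; lra.
set e := Num.floor (- beta * b - l).
have /andP[] := floor_itv (- beta * b - l); rewrite -/e intrD rmorph1 mulNr => e_le e_gt.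
set c := (- l - e%:~R - 1) / beta.
have beta_c : beta * c = - l - e%:~R - 1 by rewrite mulrC divfK ?gt_eqF.
exists (Num.max a c), e; split.
  rewrite le_max lexx /= gt_max ab /= -(ltr_pM2l beta_gt0) beta_c; lra.
move=> x /andP[]; rewrite gt_max => /andP[ax cx] xb.
rewrite /negbeta_digit /=; apply: floor_def; rewrite intrD rmorph1 mulNr.
have : - l - e%:~R - 1 < beta * x by rewrite -beta_c ltr_pM2l.
have : beta * x < beta * b by rewrite ltr_pM2l.
by move=> ? ?; apply/andP; split; lra.
Qed.

Lemma negbeta_cylinder m a b : a < b -> exists a' b', [/\ a <= a', a' < b', b' <= b &
  forall u v, a' < u < b' -> a' < v < b' -> forall k, (k < m)%N -> digit u k = digit v k].
Proof.
have beta_gt0 : 0 < beta by have := beta_gt1; lra.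
have ltr_beta x y : (x < y) = (beta * x < beta * y) by rewrite ltr_pM2l.
have ler_beta x y : (x <= y) = (beta * x <= beta * y) by rewrite ler_pM2l.
elim: m a b => [|m IHm] a b ab; first by exists a, b; rewrite !lexx.
have [a1 [e [/andP[aa1 a1b] digit0]]] := negbeta_digit0_const ab.
have /IHm [c [d [bc cd da1 digit_eq]]] : - beta * b - e%:~R < - beta * a1 - e%:~R.
  by rewrite ltrD2r !mulNr ltrN2 -ltr_beta.
rewrite !mulNr in bc da1.
pose pull y := - (y + e%:~R) / beta.
have beta_pull y : beta * pull y = - (y + e%:~R) by rewrite mulrC divfK ?gt_eqF.
have pullP u : pull d < u < pull c -> digit u 0 = e /\ c < T u < d.
  move=> /andP[du uc]; rewrite ltr_beta beta_pull in du; rewrite ltr_beta beta_pull in uc.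
  have u_itv : a1 < u < b by apply/andP; split; rewrite ltr_beta; lra.
  rewrite negbeta_TE (digit0 _ u_itv) mulNr; split=> //; apply/andP; split; lra.
exists (pull d), (pull c); split.
- by rewrite ler_beta beta_pull; move: aa1; rewrite ler_beta; lra.
- by rewrite ltr_beta !beta_pull; lra.
- by rewrite ler_beta beta_pull; lra.
move=> u v /pullP [u0 Tu] /pullP [v0 Tv] [|k] k_lt; first by rewrite u0 v0.
by rewrite -add1n !negbeta_digitD; apply: digit_eq.
Qed.

(* Only rational points are controlled by the hypothesis of the theorem:
   X is a rational point with the same first m + 1 digits as x', and T x' = A
   is rational. *)
Lemma negbeta_rational_shadow m (eta : R) : 0 < eta -> exists x' (A X : rat),
  [/\ (l + 1) / 2 < x', x' < ratr X < x' + eta, ratr X < l + 1, T x' = ratr A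
    & forall k, (k <= m)%N -> digit (ratr X) k = digit x' k].
Proof.
move=> eta_gt0; have beta_gt0 : 0 < beta by have := beta_gt1; lra.
have mid_lt : (l + 1) / 2 < l + 1 by have := l_gtN1; lra.
have [a [b [mid_a ab b_lt digit_eq]]] := negbeta_cylinder m.+1 mid_lt.
set e := digit ((a + b) / 2) 0.
have digit0 u : a < u < b -> digit u 0 = e.
  by move=> u_ab; apply: digit_eq => //; apply/andP; split; lra.
have : - beta * b - e%:~R < - beta * a - e%:~R by rewrite ltrD2r !mulNr ltrN2 ltr_pM2l.
case/rat_in_itvoo => A; rewrite in_itv /= !mulNr => /andP[A_gt A_lt].
set x' := - (ratr A + e%:~R) / beta.
have beta_x' : beta * x' = - (ratr A + e%:~R) by rewrite mulrC divfK ?gt_eqF.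
have x'_ab : a < x' < b.
  by apply/andP; split; rewrite -(ltr_pM2l beta_gt0) beta_x'; lra.
have : x' < Num.min b (x' + eta) by rewrite lt_min; apply/andP; split; lra.
case/rat_in_itvoo => X; rewrite in_itv /= lt_min => /andP[x'_X /andP[X_b X_eta]].
have X_ab : a < ratr X < b by apply/andP; split; lra.
exists x', A, X; split.
- lra.
- by rewrite x'_X X_eta.
- lra.
- by rewrite negbeta_TE digit0 // mulNr beta_x'; ring.
- by move=> k k_le; apply: digit_eq.
Qed.

Local Notation orbitC g x := (digit_orbit g (x%:C)%C (digit x)).

Lemma conj_orbit_gap (g : R[i]) (K : R) m : 1 < normc g ->
  (forall q : rat, l <= ratr q < l + 1 -> forall n, normc (orbitC g (ratr q) n) <= K) ->
  normc g ^+ m * (normc (beta%:C%C - g) * ((l + 1) / 2)) <= 2 * K + normc g.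
Proof.
move=> g_gt1 orbit_le; set r := normc g; set u := normc (beta%:C%C - g).
have r_gt0 : 0 < r by rewrite (lt_trans ltr01).
have rm_gt0 : 0 < r ^+ m by rewrite exprn_gt0.
have rmV_gt0 : 0 < (r ^+ m)^-1 by rewrite invr_gt0.
have [x' [A [X [x'_gt /andP[x'_X X_eta] X_lt Tx' digitX]]]] :=
  negbeta_rational_shadow m rmV_gt0.
have X_itv : l <= ratr X < l + 1 by apply/andP; split=> //; have := l_le0; lra.
have A_itv : l <= ratr A < l + 1 by rewrite -Tx' negbeta_T_itv.
have diffE : orbitC g (ratr X) (1 + m) - orbitC g (ratr A) m =
    (- g) ^+ m * ((beta * x')%:C%C - g * (ratr X)%:C%C).
  rewrite digit_orbitD digit_orbitB => [|k k_lt]; last first.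
    by rewrite digitX // -Tx' -[T x']/(iter 1 T x') -negbeta_digitD.
  have -> : orbitC g (ratr X) 1 = - g * (ratr X)%:C%C - (digit x' 0)%:~R by rewrite -digitX.
  rewrite -Tx' negbeta_TE !rmorphB !rmorphM rmorphN /=.
  by rewrite -(rmorph_int (real_complex R)); ring.
set D := (beta * x')%:C%C - g * (ratr X)%:C%C.
have e1 : r ^+ m * normc D <= 2 * K.
  have -> : r ^+ m = normc ((- g) ^+ m) by rewrite normcX normcN.
  rewrite -normcM -diffE (le_trans (normcB _ _)) // mulr2n mulrDl mul1r.
  by rewrite lerD ?orbit_le.
have x'_gt0 : 0 < x' by have := l_gtN1; lra.
have e2 : u * x' <= normc D + r * (ratr X - x').
  by apply: normc_subC_mul_le; rewrite x'_gt0 ltW.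
have e3 : r ^+ m * (ratr X - x') <= 1.
  by rewrite -ler_pdivlMl // mulr1 ltW // ltrBlDl.
have : r ^+ m * (u * ((l + 1) / 2)) <= r ^+ m * (u * x').
  by rewrite ler_pM2l // ler_wpM2l ?normc_ge0 // ltW.
have : r ^+ m * (u * x') <= r ^+ m * normc D + r * (r ^+ m * (ratr X - x')).
  by rewrite [r * _]mulrCA -mulrDr ler_pM2l.
have : r * (r ^+ m * (ratr X - x')) <= r by apply: ler_piMr => //; exact: ltW.
lra.
Qed.

Lemma conj_orbit_bounded_eq (g : R[i]) (K : R) : 1 < normc g ->
  (forall q : rat, l <= ratr q < l + 1 -> forall n, normc (orbitC g (ratr q) n) <= K) ->
  g = beta%:C%C.
Proof.
move=> g_gt1 orbit_le.
have := expr_bounded_le0 g_gt1 (fun m => conj_orbit_gap m g_gt1 orbit_le).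
rewrite pmulr_lle0; last by have := l_gtN1; lra.
move=> u_le0; apply/eqP; rewrite eq_sym -subr_eq0; apply/eqP/eq0_normc.
by apply/eqP; rewrite eq_le u_le0 normc_ge0.
Qed.

Lemma period_poly_root_beta q N P : l <= ratr q < l + 1 ->
  (forall n, (N <= n)%N -> digit (ratr q) (n + P) = digit (ratr q) n) ->
  root (map_poly ratr (period_poly q (digit (ratr q)) N P)) beta.
Proof.
move=> q_itv digit_per; rewrite rmorphB rootE /= hornerD hornerN.
by rewrite !horner_digit_orbit -!iter_negbeta_T negbeta_T_periodic ?subrr.
Qed.

Lemma period_poly_root_orbitC q N P (g : R[i]) :
  (forall n, (N <= n)%N -> digit (ratr q) (n + P) = digit (ratr q) n) ->
  root (map_poly ratr (period_poly q (digit (ratr q)) N P)) g ->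
  forall n, (N <= n)%N -> orbitC g (ratr q) (n + P) = orbitC g (ratr q) n.
Proof.
move=> digit_per; rewrite rmorphB rootE /= hornerD hornerN !horner_digit_orbit.
rewrite subr_eq0 (fmorph_rat (real_complex R)) => /eqP.
exact: digit_orbit_periodic.
Qed.

End NegBetaDynamics.

Section NegBetaAlgebraicInteger.
Variables (R : realType) (beta l : R).
Hypotheses (beta_gt1 : 1 < beta) (l_gtN1 : -1 < l) (l_le0 : l <= 0).
Hypothesis rational_periodic : forall x : R, is_rational x -> l <= x < l + 1 ->
  eventually_periodic (negbeta_digit beta l x).
Local Notation digit := (negbeta_digit beta l).

Lemma negbeta_alg_int : exists p, alg_int_minpoly beta p.
Proof.
pose n := (Num.bound (l + 1)^-1).+1; pose q : rat := n%:R^-1.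
have q_itv : l <= ratr q < l + 1.
  have l1_gt0 : 0 < l + 1 by have := l_gtN1; lra.
  have n_gt : (l + 1)^-1 < n%:R.
    by rewrite (lt_le_trans (archi_boundP _)) ?ler_nat // invr_ge0 ltW.
  rewrite fmorphV rmorph_nat; apply/andP; split.
    by rewrite (le_trans l_le0) // invr_ge0.
  by rewrite -[l + 1]invrK ltf_pV2 ?posrE ?invr_gt0 ?ltr0n.
have [N [P [P_gt0 digit_per]]] := rational_periodic (ex_intro _ q erefl) q_itv.
set M := ((-1) ^+ (N + P) * n%:R) *: period_poly q (digit (ratr q)) N P.
have M_monic : M \is monic by apply: period_poly_unit_fraction_monic.
have rootM : root (map_poly ratr M) beta.
  rewrite map_polyZ rootE hornerZ.
  by rewrite (rootP (period_poly_root_beta beta_gt1 q_itv digit_per)) ?mulr0.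
have [p p_min] := exists_minpoly (monic_neq0 M_monic) rootM.
exists p; split=> //; apply: dvdp_monic_int (minpoly_dvdp p_min rootM) => //.
  by case: p_min.
by move=> i; apply: period_poly_unit_fraction_int.
Qed.

Lemma negbeta_conjugate_le1 p z :
  is_minpoly beta p -> other_conjugate beta p z -> `|z| <= 1.
Proof.
move=> p_min [rootz z_neq]; rewrite real_leNgt ?real1 ?normr_real //.
apply/negP; rewrite -normc_gt1 => z_gt1; move/eqP: z_neq; apply.
apply: (conj_orbit_bounded_eq beta_gt1 l_gtN1 l_le0 (K := (beta + 1) / (normc z - 1)) z_gt1).
move=> q q_itv.
have [N [P [P_gt0 digit_per]]] := rational_periodic (ex_intro _ q erefl) q_itv.
have rootq := period_poly_root_beta beta_gt1 q_itv digit_per.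
have orbit_per :=
  period_poly_root_orbitC digit_per (minpoly_root_conjugate p_min rootq rootz).
apply: normc_digit_orbit_le => // [i|]; first exact: negbeta_digit_bound.
have [B orbit_le] : exists B, forall k,
    `|normc (digit_orbit z (ratr q)%:C%C (digit (ratr q)) k)| <= B.
  by apply: (eventually_periodic_bounded P_gt0) => k /orbit_per ->.
by exists B => k; rewrite (le_trans (ler_norm _)).
Qed.

End NegBetaAlgebraicInteger.

Theorem mainTheorem8 (R : realType) (beta l : R) :
  1 < beta -> -1 < l <= 0 ->
  (forall x : R, is_rational x -> l <= x < l + 1 ->
     eventually_periodic (negbeta_digit beta l x)) ->
  Pisot beta \/ Salem beta.
Proof.
move=> beta_gt1 /andP[l_gtN1 l_le0] periodic.
have [p [p_min p_int]] := negbeta_alg_int beta_gt1 l_gtN1 l_le0 periodic.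
have conj_le1 := negbeta_conjugate_le1 beta_gt1 l_gtN1 l_le0 periodic p_min.
have [[z [z_conj z_eq1]] | no_unit_conj] :=
  pselect (exists z, other_conjugate beta p z /\ `|z| = 1).
  by right; split=> //; exists p; split=> //; split=> //; exists z.
left; split=> //; exists p; split=> // z z_conj.
by rewrite lt_neqAle conj_le1 // andbT; apply/eqP => z_eq1; apply: no_unit_conj; exists z.
Qed.
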